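(* Let $n\ge 1$. If there exist a commutative ring $R$, an injective group homomorphism $\iota:\mu_n\to R^\times$, and an $\mathbb{S}[\mu_{n,+}]$-generator $X\in R$, then $n+1$ is a prime power.
   Context: $\mu_n$ is the group of $n$-th roots of unity. With $\iota(0):=0$, $X\in R$ is an $\mathbb{S}[\mu_{n,+}]$-generator of $R$ if every $z\in R$ can be written uniquely as a finite sum $\sum_j\iota(\alpha_j)X^j$ with $\alpha_j\in\mu_n\cup\{0\}$. *)

From HB Require Import structures.
From mathcomp Require Import all_boot all_order all_algebra all_field.
Set Implicit Arguments. Unset Strict Implicit. Unset Printing Implicit Defensive.
Import Order.TTheory GRing.Theory Num.Theory.
Local Open Scope ring_scope.

Definition mu (n : nat) : pred algC := [pred z : algC | z ^+ n == 1].

(* iota is an injective group homomorphism mu_n -> R^x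
   (given as a map algC -> R, only its values on mu_n matter). *)
Definition inj_unit_hom (R : comNzRingType) (n : nat) (iota : algC -> R) : Prop :=
  [/\ forall a, a \in mu n -> exists b : R, iota a * b = 1,
      forall a b, a \in mu n -> b \in mu n -> iota (a * b) = iota a * iota b
    & forall a b, a \in mu n -> b \in mu n -> iota a = iota b -> a = b].

Definition iota0 (R : comNzRingType) (iota : algC -> R) (a : algC) : R :=
  if a == 0 then 0 else iota a.

Definition represents (R : comNzRingType) (n : nat) (iota : algC -> R)
    (X : R) (c : nat -> algC) (z : R) : Prop :=
  (forall j, c j = 0 \/ c j \in mu n) /\
  exists N : nat, (forall j, (N <= j)%N -> c j = 0) /\
    z = \sum_(j < N) iota0 iota (c j) * X ^+ j.

Definition S_mu_generator (R : comNzRingType) (n : nat) (iota : algC -> R) (X : R) : Prop :=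
  forall z : R,
    (exists c, represents n iota X c z) /\
    (forall c c', represents n iota X c z -> represents n iota X c' z ->
       forall j, c j = c' j).

From HB Require Import structures.
From mathcomp Require Import all_boot all_order all_algebra all_field.
From mathcomp Require Import boolp.

Set Implicit Arguments. Unset Strict Implicit. Unset Printing Implicit Defensive.
Import Order.TTheory GRing.Theory Num.Theory.
Local Open Scope ring_scope.
Local Open Scope quotient_scope.

(* Reading off the constant digit of an expansion shows that every element of
   R is congruent modulo X to exactly one of the n + 1 elements iota(0) = 0 and
   iota(zeta), zeta in mu_n.  The latter are units of R, so R/XR is a field with
   n + 1 elements, and the order of a finite field is a prime power. *)

Lemma finField_card_prime_power (F : finFieldType) :
  exists p k, [/\ prime p, (0 < k)%N & #|F| = (p ^ k)%N].
Proof.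
have [p p_prime pcharF] := finPcharP F.
have F_gt1 : (1 < #|F|)%N.
  by apply/card_gt1P; exists 0, 1; rewrite !inE eq_sym oner_neq0.
have cardF : #|F| = (p ^ logn p #|F|)%N := card_pprimeChar pcharF.
exists p, (logn p #|F|); split => //.
by move: F_gt1; rewrite {1}cardF; case: (logn _ _).
Qed.

Lemma sum_expr_recl (R : comNzRingType) (X : R) (f : nat -> R) N :
  \sum_(j < N.+1) f j * X ^+ j = f 0%N + X * \sum_(j < N) f j.+1 * X ^+ j.
Proof.
rewrite big_ord_recl expr0 mulr1 mulr_sumr; congr (_ + _).
by apply: eq_bigr => j _; rewrite exprS mulrCA.
Qed.

Section PrincipalIdeal.
Variables (R : comNzRingType) (X : R).

(* Membership in XR is decided classically: the ideal quotients of
   ring_quotient need a boolean ideal predicate. *)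
Definition multiples : pred R := fun z => `[< exists w, z = X * w >].

Lemma multiplesP z : reflect (exists w, z = X * w) (z \in multiples).
Proof. exact: asboolP. Qed.

Lemma multiples0 : 0 \in multiples.
Proof. by apply/multiplesP; exists 0; rewrite mulr0. Qed.

Lemma multiples_idealr_closed :
  (forall w, X * w != 1) -> idealr_closed multiples.
Proof.
move=> X_nonunit; split; first exact: multiples0.
  by apply/multiplesP => -[w /eqP]; rewrite eq_sym (negbTE (X_nonunit w)).
move=> a u v /multiplesP[x ->] /multiplesP[y ->].
by apply/multiplesP; exists (a * x + y); rewrite mulrDr mulrCA.
Qed.

End PrincipalIdeal.

Section ResidueField.
Variables (R : comNzRingType) (X : R) (D : finType) (rep : D -> R).
Hypotheses (X_nonunit : forall w, X * w != 1)
  (rep_complete : forall z, exists d, z - rep d \in multiples X)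
  (rep_unique : forall d e, rep d - rep e \in multiples X -> d = e)
  (rep_invertible : forall d, rep d \notin multiples X ->
     exists u, u * rep d - 1 \in multiples X).

HB.instance Definition _ :=
  isIdealr.Build R (multiples X) (multiples_idealr_closed X_nonunit).

Definition multiples_ideal : idealr R := Idealr.clone _ (multiples X) _.

Local Notation Q := {ideal_quot multiples_ideal}.

Lemma eq_residue u v : (\pi_Q u == \pi_Q v) = (u - v \in multiples X).
Proof. by rewrite Quotient.idealrBE. Qed.

Definition residue d : Q := \pi_Q (rep d).

Lemma residue_surj (x : Q) : exists d, residue d == x.
Proof.
have [d hd] := rep_complete (repr x).
by exists d; rewrite -[x]reprK eq_sym eq_residue.
Qed.

Definition digit (x : Q) : D := xchoose (residue_surj x).

Lemma digitK : cancel digit residue.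
Proof. by move=> x; apply/eqP/(xchooseP (residue_surj x)). Qed.

Lemma residue_inj : injective residue.
Proof. by move=> d e /eqP; rewrite eq_residue; apply: rep_unique. Qed.

HB.instance Definition _ := CanIsCountable digitK.
HB.instance Definition _ : isFinite Q := CanIsFinite digitK.

Lemma card_residue : #|{: Q}| = #|D|.
Proof.
apply/esym/bij_eq_card; exists digit; last exact: digitK.
by move=> d; apply: residue_inj; rewrite digitK.
Qed.

Definition residue_inv (x : Q) : Q := odflt 0 [pick y | y * x == 1].

Lemma residue_mulVf (x : Q) : x != 0 -> residue_inv x * x = 1.
Proof.
rewrite -(digitK x) /residue -(rmorph0 \pi_Q) eq_residue subr0.
move=> /rep_invertible[u]; rewrite -eq_residue rmorphM rmorph1 => /eqP inv_u.
rewrite /residue_inv; case: pickP => [y /eqP //|/(_ (\pi_Q u))].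
by rewrite inv_u eqxx.
Qed.

Lemma residue_inv0 : residue_inv 0 = 0.
Proof.
by rewrite /residue_inv; case: pickP => // y; rewrite mulr0 eq_sym oner_eq0.
Qed.

HB.instance Definition _ :=
  GRing.ComNzRing_isField.Build Q residue_mulVf residue_inv0.

Lemma card_residue_system_prime_power :
  exists p k, [/\ prime p, (0 < k)%N & #|D| = (p ^ k)%N].
Proof. by rewrite -card_residue; apply: finField_card_prime_power. Qed.

End ResidueField.

Lemma mu_neq0 n a : (0 < n)%N -> a \in mu n -> a != 0.
Proof.
move=> n_gt0; rewrite inE; apply: contraL => /eqP ->.
by rewrite expr0n eqn0Ngt n_gt0 eq_sym oner_eq0.
Qed.

Section RootOfUnityDigits.
Variables (n : nat) (w : algC).
Hypothesis prim_w : n.-primitive_root w.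

Definition mu_digit (d : option 'I_n) : algC := if d is Some i then w ^+ i else 0.

Lemma expr_prim_mu i : w ^+ i \in mu n.
Proof. by rewrite inE -exprM mulnC exprM (prim_expr_order prim_w) expr1n. Qed.

Lemma mu_digit_valid d : mu_digit d = 0 \/ mu_digit d \in mu n.
Proof. by case: d => [i|]; [right; apply: expr_prim_mu | left]. Qed.

Lemma mu_digit_inj : injective mu_digit.
Proof.
have wi_neq0 i : w ^+ i != 0 := mu_neq0 (prim_order_gt0 prim_w) (expr_prim_mu i).
case=> [i|] [j|] //= => [/eqP|/eqP|/esym/eqP]; rewrite ?(negbTE (wi_neq0 _)) //.
by rewrite (eq_prim_root_expr prim_w) !modn_small // => /eqP/val_inj ->.
Qed.

Lemma mu_digit_surj a : a = 0 \/ a \in mu n -> exists d, mu_digit d = a.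
Proof.
case=> [->|]; first by exists None.
by rewrite inE => /eqP /(prim_rootP prim_w)[i ->]; exists (Some i).
Qed.

End RootOfUnityDigits.

Section GeneratorDigits.
Variables (n : nat) (R : comNzRingType) (iota : algC -> R) (X : R).
Hypothesis hX : S_mu_generator n iota X.

Lemma generator_residue_digit z :
  exists a, (a = 0 \/ a \in mu n) /\ z - iota0 iota a \in multiples X.
Proof.
have [[c [hc [N [hN ->]]]] _] := hX z.
exists (c 0%N); split => //; apply/multiplesP.
case: N hN => [|N] hN.
  by exists 0; rewrite big_ord0 hN // /iota0 eqxx subr0 mulr0.
by exists (\sum_(j < N) iota0 iota (c j.+1) * X ^+ j); rewrite (sum_expr_recl X (fun j => iota0 iota (c j))) addrC addKr.
Qed.

Lemma generator_digit_unique a b : a = 0 \/ a \in mu n -> b = 0 \/ b \in mu n ->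
  iota0 iota a - iota0 iota b \in multiples X -> a = b.
Proof.
move=> Da Db /multiplesP[v hv].
have [[d [hd [M [hM def_v]]]] _] := hX v.
pose c j := if j is 0%N then a else 0.
pose c' j := if j is j'.+1 then d j' else b.
have rep_c : represents n iota X c (iota0 iota a).
  split; first by case=> [|j] //; left.
  by exists 1%N; split; [case | rewrite big_ord1 expr0 mulr1].
have rep_c' : represents n iota X c' (iota0 iota a).
  split; first by case.
  exists M.+1; split; first by case=> // j /hM.
  by rewrite (sum_expr_recl X (fun j => iota0 iota (c' j))) -def_v -hv addrC subrK.
exact: (hX _).2 c c' rep_c rep_c' 0%N.
Qed.

End GeneratorDigits.

Section DigitResidues.
Variables (n : nat) (R : comNzRingType) (iota : algC -> R) (X : R) (w : algC).
Hypotheses (hiota : inj_unit_hom n iota) (hX : S_mu_generator n iota X)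
  (prim_w : n.-primitive_root w).

Local Notation digit_rep d := (iota0 iota (@mu_digit n w d)).

Lemma iota1 : iota 1 = 1.
Proof.
have [iota_unit iotaM _] := hiota.
have mu1 : (1 : algC) \in mu n by rewrite inE expr1n.
have [b iota1b] := iota_unit 1 mu1.
have iota1_idem : iota 1 = iota 1 * iota 1 by rewrite -iotaM // mulr1.
by rewrite -iota1b {2}iota1_idem -mulrA iota1b mulr1.
Qed.

Lemma generator_nonunit v : X * v != 1.
Proof.
apply/eqP => Xv1; suff /eqP : (1 : algC) = 0 by rewrite oner_eq0.
apply: (generator_digit_unique hX); [by right; rewrite inE expr1n | by left |].
by apply/multiplesP; exists v; rewrite /iota0 oner_eq0 eqxx iota1 subr0.
Qed.

Lemma digit_rep_complete z : exists d, z - digit_rep d \in multiples X.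
Proof.
have [a [Da za]] := generator_residue_digit hX z.
by have [d def_a] := mu_digit_surj prim_w Da; exists d; rewrite def_a.
Qed.

Lemma digit_rep_unique d e : digit_rep d - digit_rep e \in multiples X -> d = e.
Proof.
move=> de; apply: (mu_digit_inj prim_w).
by apply: (generator_digit_unique hX) de; apply: mu_digit_valid.
Qed.

Lemma digit_rep_invertible d : digit_rep d \notin multiples X ->
  exists u, u * digit_rep d - 1 \in multiples X.
Proof.
case: d => [i _|] /=; last by rewrite /iota0 eqxx multiples0.
have [_ iotaM _] := hiota.
have a_mu := expr_prim_mu prim_w i.
have a_neq0 := mu_neq0 (prim_order_gt0 prim_w) a_mu.
have aV_mu : (w ^+ i)^-1 \in mu n by rewrite inE exprVn (eqP a_mu) invr1.
exists (iota (w ^+ i)^-1).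
by rewrite /iota0 (negbTE a_neq0) -iotaM // mulVf // iota1 subrr multiples0.
Qed.

End DigitResidues.

Theorem corollary5p8 (n : nat) (hn : (1 <= n)%N)
  (R : comNzRingType) (iota : algC -> R) (X : R)
  (hiota : inj_unit_hom n iota) (hX : S_mu_generator n iota X) :
  exists p k : nat, [/\ prime p, (0 < k)%N & n.+1 = (p ^ k)%N].
Proof.
have [w prim_w] := C_prim_root_exists hn.
have [p [k [p_prime k_gt0 card_digits]]] := card_residue_system_prime_power
  (generator_nonunit hiota hX) (digit_rep_complete hX prim_w)
  (digit_rep_unique hX prim_w) (digit_rep_invertible hiota prim_w).
by exists p, k; rewrite -card_digits card_option card_ord.
Qed.
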